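(* For positive integers $b,c$ with $1\le b<b+2\le c$, $$\frac{c+1}{c-b}\le\sum_{t=0}^\infty\frac{(b+t)!\,c!}{(c+t)!\,b!}\le\frac{c+1}{c-b}\bigl(1+\varepsilon(c-b)\bigr),$$ where $\varepsilon(a)=3\,\dfrac{1+\ln a}{a}+4e^{1/12}\,2^{-a/2}$. *)

From Stdlib Require Import Reals Arith Factorial.
From Coquelicot Require Import Coquelicot.
Open Scope R_scope.

Definition term (b c t : nat) : R :=
  (INR (fact (b + t)) * INR (fact c)) / (INR (fact (c + t)) * INR (fact b)).

Definition eps (a : R) : R :=
  3 * (1 + ln a) / a + 4 * exp (1 / 12) * Rpower 2 (- a / 2).

From Stdlib Require Import Reals Lra Lia Factorial.
From Coquelicot Require Import Coquelicot.
Open Scope R_scope.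

(** The sum is known in closed form.  Consecutive terms satisfy
    [(c+t+1) term (t+1) = (b+t+1) term t], so the weights
    [w t = (c+t) term t] telescope: [(c-b-1) term t = w t - w (t+1)].
    Since [w 0 = c] and [w t = O(1/t)] when [c >= b+2], the series sums to
    [c / (c-b-1)].  Both bounds are then elementary: the lower one holds for
    any [b >= 0], and the upper one only needs [(a-1) eps a >= 1], which
    follows from [eps a > 3/a]. *)

Section Telescoping.

Variables b c : nat.

Lemma term_pos (t : nat) : 0 < term b c t.
Proof.
  unfold term. apply Rdiv_lt_0_compat; apply Rmult_lt_0_compat;
    apply lt_0_INR, lt_O_fact.
Qed.

Lemma term_succ (t : nat) :
  INR (c + t + 1) * term b c (S t) = INR (b + t + 1) * term b c t.
Proof.
  unfold term.
  replace (b + S t)%nat with (S (b + t)) by lia.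
  replace (c + S t)%nat with (S (c + t)) by lia.
  replace (b + t + 1)%nat with (S (b + t)) by lia.
  replace (c + t + 1)%nat with (S (c + t)) by lia.
  rewrite !fact_simpl, !mult_INR.
  pose proof (INR_fact_neq_0 b). pose proof (INR_fact_neq_0 (c + t)).
  assert (INR (S (c + t)) <> 0) by (apply not_0_INR; lia).
  field; auto.
Qed.

Definition weight (t : nat) : R := INR (c + t) * term b c t.

Lemma weight0 : weight 0 = INR c.
Proof.
  unfold weight, term. rewrite !Nat.add_0_r.
  pose proof (INR_fact_neq_0 b). pose proof (INR_fact_neq_0 c).
  field; auto.
Qed.

Lemma weight_nonneg (t : nat) : 0 <= weight t.
Proof. unfold weight. pose proof (term_pos t). pose proof (pos_INR (c + t)). nra. Qed.

Lemma weight_telescope (t : nat) :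
  (INR c - INR b - 1) * term b c t = weight t - weight (S t).
Proof.
  unfold weight. replace (c + S t)%nat with (c + t + 1)%nat by lia.
  rewrite term_succ, !plus_INR. simpl. ring.
Qed.

Lemma partial_sum_term (n : nat) :
  (INR c - INR b - 1) * sum_n (term b c) n = INR c - weight (S n).
Proof.
  induction n as [|n IH].
  - rewrite sum_O, weight_telescope, weight0. ring.
  - rewrite sum_Sn. unfold plus; simpl.
    rewrite Rmult_plus_distr_l, IH, weight_telescope. ring.
Qed.

Hypothesis hbc : (b + 2 <= c)%nat.

Lemma weight_succ_mul_le (n : nat) :
  weight (S n) * INR (b + S n + 1) <= weight n * INR (b + n + 1).
Proof.
  assert (Hw : weight (S n) = INR (b + n + 1) * term b c n).
  { unfold weight. replace (c + S n)%nat with (c + n + 1)%nat by lia.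
    apply term_succ. }
  rewrite Hw. unfold weight.
  assert (INR (b + S n + 1) <= INR (c + n)) by (apply le_INR; lia).
  pose proof (term_pos n). pose proof (pos_INR (b + n + 1)).
  replace (INR (c + n) * term b c n * INR (b + n + 1))
    with (INR (b + n + 1) * term b c n * INR (c + n)) by ring.
  apply Rmult_le_compat_l; [apply Rmult_le_pos|]; lra.
Qed.

Lemma weight_mul_le (n : nat) : weight n * INR (b + n + 1) <= INR c * INR (b + 1).
Proof.
  induction n as [|n IH].
  - rewrite weight0, Nat.add_0_r. lra.
  - eapply Rle_trans; [apply weight_succ_mul_le | exact IH].
Qed.

Lemma weight_lim0 : is_lim_seq weight 0.
Proof.
  set (K := INR c * INR (b + 1)).
  apply is_lim_seq_le_le with (u := fun _ => 0)
    (w := fun n => K * / INR (n + (b + 1))).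
  - intro n. split; [apply weight_nonneg|].
    replace (n + (b + 1))%nat with (b + n + 1)%nat by lia.
    assert (Hpos : 0 < INR (b + n + 1)) by (apply lt_0_INR; lia).
    apply (Rmult_le_reg_r (INR (b + n + 1))); [exact Hpos|].
    rewrite Rmult_assoc, Rinv_l, Rmult_1_r by lra.
    apply weight_mul_le.
  - apply is_lim_seq_const.
  - replace (Finite 0) with (Rbar_mult K (Rbar_inv p_infty))
      by (simpl; f_equal; ring).
    apply is_lim_seq_scal_l, is_lim_seq_inv; [|discriminate].
    apply (is_lim_seq_incr_n INR), is_lim_seq_INR.
Qed.

Lemma is_series_term : is_series (term b c) (INR c / (INR c - INR b - 1)).
Proof.
  assert (Hd : 1 <= INR c - INR b - 1).
  { assert (INR (b + 2) <= INR c) by (apply le_INR; lia).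
    rewrite plus_INR in H. simpl in H. lra. }
  change (is_lim_seq (sum_n (term b c)) (INR c / (INR c - INR b - 1))).
  apply (is_lim_seq_ext (fun n => / (INR c - INR b - 1) * (INR c - weight (S n)))).
  { intro n. rewrite <- partial_sum_term. field. lra. }
  replace (Finite (INR c / (INR c - INR b - 1)))
    with (Rbar_mult (/ (INR c - INR b - 1)) (INR c - 0))
    by (simpl; f_equal; field; lra).
  apply is_lim_seq_scal_l, is_lim_seq_minus'; [apply is_lim_seq_const|].
  apply (is_lim_seq_incr_1 weight), weight_lim0.
Qed.

End Telescoping.

Lemma ratio_lower (b c : R) :
  0 <= b -> b + 1 < c -> (c + 1) / (c - b) <= c / (c - b - 1).
Proof.
  intros Hb Hbc.
  apply (Rmult_le_reg_r ((c - b) * (c - b - 1))); [nra|].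
  replace ((c + 1) / (c - b) * ((c - b) * (c - b - 1)))
    with ((c + 1) * (c - b - 1)) by (field; lra).
  replace (c / (c - b - 1) * ((c - b) * (c - b - 1)))
    with (c * (c - b)) by (field; lra).
  nra.
Qed.

Lemma ratio_upper (b c e : R) :
  0 <= b -> b + 1 < c -> 1 <= (c - b - 1) * e ->
  c / (c - b - 1) <= (c + 1) / (c - b) * (1 + e).
Proof.
  intros Hb Hbc He.
  apply (Rmult_le_reg_r ((c - b) * (c - b - 1))); [nra|].
  replace (c / (c - b - 1) * ((c - b) * (c - b - 1)))
    with (c * (c - b)) by (field; lra).
  replace ((c + 1) / (c - b) * (1 + e) * ((c - b) * (c - b - 1)))
    with ((c + 1) * (c - b - 1) + (c + 1) * ((c - b - 1) * e)) by (field; lra).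
  nra.
Qed.

Lemma eps_gt (a : R) : 1 <= a -> 3 / a < eps a.
Proof.
  intro Ha. unfold eps.
  assert (0 <= ln a) by (rewrite <- ln_1; apply ln_le; lra).
  assert (0 < 4 * exp (1 / 12) * Rpower 2 (- a / 2)).
  { pose proof (exp_pos (1 / 12)).
    assert (0 < Rpower 2 (- a / 2)) by apply exp_pos.
    nra. }
  assert (3 / a <= 3 * (1 + ln a) / a).
  { unfold Rdiv. apply Rmult_le_compat_r; [left; apply Rinv_0_lt_compat|]; lra. }
  lra.
Qed.

Lemma one_le_pred_mul_eps (a : R) : 3 / 2 <= a -> 1 <= (a - 1) * eps a.
Proof.
  intro Ha.
  pose proof (eps_gt a ltac:(lra)).
  assert (1 <= (a - 1) * (3 / a)).
  { apply (Rmult_le_reg_r a); [lra|].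
    replace ((a - 1) * (3 / a) * a) with (3 * (a - 1)) by (field; lra).
    lra. }
  nra.
Qed.

Theorem lemma2 (b c : nat) (hb : (1 <= b)%nat) (hbc : (b + 2 <= c)%nat) :
  ex_series (term b c) /\
  (INR c + 1) / (INR c - INR b) <= Series (term b c) /\
  Series (term b c) <=
    (INR c + 1) / (INR c - INR b) * (1 + eps (INR c - INR b)).
Proof.
  pose proof (is_series_term b c hbc) as Hsum.
  rewrite (is_series_unique _ _ Hsum).
  assert (Hb : 0 <= INR b) by apply pos_INR.
  assert (Hc : INR b + 2 <= INR c).
  { replace 2 with (INR 2) by reflexivity. rewrite <- plus_INR. apply le_INR, hbc. }
  split; [eexists; exact Hsum|].
  split.
  - apply ratio_lower; lra.
  - apply ratio_upper; [lra | lra |].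
    apply one_le_pred_mul_eps. lra.
Qed.
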